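(* Let $\Gamma$ be a gain operator on $\ell^\infty_+(\mathcal I)$ with $|\mathcal I|<\infty$. Then $\Gamma$ satisfies the NJI condition if and only if $\Gamma$ satisfies the uniform NJI condition.
   Context: Let $\mathcal I$ be a nonempty countable index set; $\ell^\infty_+(\mathcal I)$ is the cone of nonnegative real families $s=(s_i)_{i\in\mathcal I}$ with $\|s\|:=\sup_i|s_i|<\infty$; $s^1\le s^2$ means componentwise; $s>0$ means $s\ge0$, $s\ne0$; $\Gamma(s)\not\ge s$ means it is not the case that $\Gamma(s)\ge s$. $\mathcal K_\infty$: continuous strictly increasing unbounded $\gamma:\mathbb R_+\to\mathbb R_+$ with $\gamma(0)=0$. For $\mathcal J\subset\mathcal I$, $s_{|\mathcal J}$ agrees with $s$ on $\mathcal J$ and is $0$ elsewhere. Gain operator: for each $i$ a finite (possibly empty) $\mathcal I_i\subset\mathcal I\setminus\{i\}$; directed graph $\mathcal G$ with vertices $\mathcal I$ and edges $ji$, $j\in\mathcal I_i$; a pointwise equicontinuous family $\gamma_{ij}\in\mathcal K_\infty$ ($ji\in E(\mathcal G)$); functions $\mu_i:\ell^\infty_+(\mathcal I)\to[0,\infty]$ with (M1) some $\xi\in\mathcal K_\infty$ has $\mu_i(0)=0$, $\mu_i(s)\ge\xi(\|s\|)$ for all $i,s$; (M2) $\mu_i$ monotone; (M3) for each finite $\mathcal J$, $\mu_i$ restricted to vectors vanishing off $\mathcal J$ is finite-valued and continuous; (M4) for each norm-bounded $A$ and $\varepsilon>0$ there is $\delta>0$ with $\sup_i|\mu_i(s_{|\mathcal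 I_i})-\mu_i(s^0_{|\mathcal I_i})|\le\varepsilon$ whenever $s^0\in A$, $\|s-s^0\|\le\delta$. $\Gamma_i(s):=\mu_i([\gamma_{ij}(s_j)]_{j\in\mathcal I_i})$ (argument zero outside $\mathcal I_i$). $\mathcal N^-_i(n)$ is the set of vertices $j$ from which there is a directed path to $i$ of length at most $n$ ($\mathcal N^-_i(0)=\{i\}$). NJI condition: $\Gamma(s)\not\ge s$ for all $s>0$. Uniform NJI condition: for all $r,\varepsilon>0$ there are $n\in\mathbb N$ and $\delta>0$ such that for all $s\in\ell^\infty_+(\mathcal I)$ and $i\in\mathcal I$ with $s_i\ge\varepsilon$ and $\|s\|\le r$ there is $j\in\mathcal N^-_i(n)$ with $s_j\ge\delta$ and $\Gamma_j(s)<s_j$. *)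

From HB Require Import structures.
From mathcomp Require Import all_boot all_order all_algebra.
From mathcomp Require Import all_classical all_reals all_analysis.
Set Implicit Arguments. Unset Strict Implicit. Unset Printing Implicit Defensive.
Import Order.TTheory GRing.Theory Num.Theory.
Local Open Scope classical_set_scope.
Local Open Scope ring_scope.
Import numFieldNormedType.Exports.

(* The index set is a (nonempty) finite type I; an element of
   l^oo_+(I) is a function s : I -> R with nonnegative values. *)

(* class K_oo on R_+ (functions R -> R, only their values on [0,oo) matter) *)
Definition Kinf (R : realType) (g : R -> R) : Prop :=
  [/\ g 0 = 0,
      {within [set x : R | 0 <= x], continuous g},
      (forall x y : R, 0 <= x -> x < y -> g x < g y) &
      (forall M : R, exists x : R, 0 <= x /\ M < g x)].

Definition supnorm (R : realType) (I : finType) (s : I -> R) : R :=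
  \big[Num.max/0]_(i : I) `|s i|.

Definition nonneg (R : realType) (I : finType) (s : I -> R) : Prop :=
  forall i, 0 <= s i.

Definition restrict (R : realType) (I : finType) (J : {set I}) (s : I -> R)
  : I -> R := fun j => if j \in J then s j else 0.

Definition Gamma_i (R : realType) (I : finType) (Ii : I -> {set I})
  (gamma : I -> I -> R -> R) (mu : I -> (I -> R) -> \bar R) (i : I) (s : I -> R)
  : \bar R :=
  mu i (restrict (Ii i) (fun j => gamma i j (s j))).

(* j is in N^-_i(n): there is a directed path of length <= n from j to i in
   the graph with edges j -> k for j in I_k *)
Definition in_Nminus (I : finType) (Ii : I -> {set I}) (n : nat) (i j : I)
  : Prop :=
  exists p : seq I,
    [/\ path (fun a b => a \in Ii b) j p, last j p = i & (size p <= n)%N].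

Definition is_gain_operator (R : realType) (I : finType) (Ii : I -> {set I})
  (gamma : I -> I -> R -> R) (mu : I -> (I -> R) -> \bar R) : Prop :=
      (forall i, i \notin Ii i) /\
      (forall i j, j \in Ii i -> Kinf (gamma i j)) /\
      (forall x : R, 0 <= x -> forall eps : R, 0 < eps ->
         exists2 d : R, 0 < d & forall i j, j \in Ii i ->
           forall y : R, 0 <= y -> `|y - x| < d ->
             `|gamma i j y - gamma i j x| < eps) /\
      (exists xi : R -> R, Kinf xi /\
         forall i, mu i (fun _ => 0) = 0%E /\
           forall s, nonneg s -> ((xi (supnorm s))%:E <= mu i s)%E) /\
      (forall i (s1 s2 : I -> R), nonneg s1 -> (forall j, s1 j <= s2 j) ->
         (mu i s1 <= mu i s2)%E) /\
      (forall i (J : {set I}),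
         let D := fun s : I -> R => nonneg s /\ forall j, j \notin J -> s j = 0 in
         (forall s, D s -> mu i s \is a fin_num) /\
         (forall s0, D s0 -> forall eps : R, 0 < eps ->
            exists2 d : R, 0 < d & forall s, D s ->
              supnorm (fun j => s j - s0 j) < d ->
              `|fine (mu i s) - fine (mu i s0)| < eps)) /\
      (forall A : set (I -> R), (forall s, A s -> nonneg s) ->
         (exists r : R, forall s, A s -> supnorm s <= r) ->
         forall eps : R, 0 < eps ->
         exists2 d : R, 0 < d & forall s0 s, A s0 -> nonneg s ->
           supnorm (fun j => s j - s0 j) <= d ->
           forall i, (`|mu i (restrict (Ii i) s) - mu i (restrict (Ii i) s0)|
                        <= eps%:E)%E).

Definition NJI (R : realType) (I : finType) (Ii : I -> {set I})
  (gamma : I -> I -> R -> R) (mu : I -> (I -> R) -> \bar R) : Prop :=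
  forall s : I -> R, nonneg s -> s <> (fun _ => 0) ->
    ~ (forall i, ((s i)%:E <= Gamma_i Ii gamma mu i s)%E).

Definition uniform_NJI (R : realType) (I : finType) (Ii : I -> {set I})
  (gamma : I -> I -> R -> R) (mu : I -> (I -> R) -> \bar R) : Prop :=
  forall r eps : R, 0 < r -> 0 < eps ->
    exists n : nat, exists2 delta : R, 0 < delta &
      forall (s : I -> R) (i : I), nonneg s -> eps <= s i -> supnorm s <= r ->
        exists j : I, [/\ in_Nminus Ii n i j, delta <= s j &
                          (Gamma_i Ii gamma mu j s < (s j)%:E)%E].

(* Uniform NJI implies NJI by applying it with r = ||s|| and eps = s_i at a
   positive coordinate i of s.  Conversely, suppose uniform NJI fails for some
   r, eps, even with n = |I|.  Then every delta > 0 admits a counterexample in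
   the box [0, r]^I, and since I is finite a single index i carries
   counterexamples for all delta.  By Tychonoff these have a cluster point s*
   with s*_i >= eps.  As Gamma is continuous, Gamma_j(s) < s_j is an open
   condition, so no j upstream of i satisfies it at s*.  The set of vertices
   upstream of i is closed under predecessors, so restricting s* to it leaves
   Gamma unchanged there and gives a nonzero s with Gamma(s) >= s, against NJI. *)

From mathcomp Require Import all_boot all_order all_algebra.
From mathcomp Require Import all_classical all_reals all_analysis.
From mathcomp Require Import lra.
Set Implicit Arguments. Unset Strict Implicit. Unset Printing Implicit Defensive.
Import Order.TTheory GRing.Theory Num.Theory.
Local Open Scope classical_set_scope.
Local Open Scope ring_scope.
Import numFieldNormedType.Exports.
Import ArrowAsProduct.

Lemma Kinf_ge0 (R : realType) (g : R -> R) x : Kinf g -> 0 <= x -> 0 <= g x.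
Proof.
case=> g0 _ gi _; rewrite le_eqVlt => /orP[/eqP <-|x0]; first by rewrite g0.
by rewrite -g0 ltW // gi.
Qed.

Lemma ler_supnorm (R : realType) (I : finType) (s : I -> R) i :
  `|s i| <= supnorm s.
Proof. exact: (le_bigmax 0 (fun i => `|s i|)). Qed.

Lemma supnorm_ge0 (R : realType) (I : finType) (s : I -> R) : 0 <= supnorm s.
Proof. exact: bigmax_ge_id. Qed.

Lemma supnorm_lt (R : realType) (I : finType) (s : I -> R) d :
  0 < d -> (forall i, `|s i| < d) -> supnorm s < d.
Proof. by move=> d0 sd; apply: bigmax_lt. Qed.

(* Instance inference does not find this filter on the product topology. *)
Definition fun_nbhs_filter (R : realType) (I : finType) (f : I -> R) :
  Filter (nbhs f) := @nbhs_filter (prod_topology (fun _ : I => R)) f.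

Lemma near_coord (R : realType) (I : finType) (f : I -> R) i (e : R) :
  0 < e -> \forall g \near f, `|g i - f i| < e.
Proof.
move=> e0.
have coord := @proj_continuous I (fun _ => R) i f _ (nbhsx_ballx (f i) e e0).
by apply: (@filterS _ _ (fun_nbhs_filter f) _ _ _ coord) => g; rewrite /proj /ball /= distrC.
Qed.

Lemma finite_exists_forall_gt0 (R : realDomainType) (I : finType)
    (P : I -> R -> Prop) :
  (forall i d d', 0 < d -> d <= d' -> P i d -> P i d') ->
  (forall d, 0 < d -> exists i, P i d) -> exists i, forall d, 0 < d -> P i d.
Proof.
move=> Pmono Pex; apply: contrapT => /forallNP noi.
have /choice [D HD] : forall i, exists d, 0 < d /\ ~ P i d.
  by move=> i; have /existsNP [d /not_implyP] := noi i; exists d.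
pose dmin := \big[Num.min/1]_i D i.
have dmin0 : 0 < dmin by apply/bigmin_gtP; split => // i _; exact: (HD i).1.
have [i Pi] := Pex dmin dmin0.
by apply: (HD i).2; apply: Pmono Pi => //; exact: bigmin_le.
Qed.

Lemma box_cluster (R : realType) (I : finType) (r : R)
    (B : R -> set (I -> R)) :
  (forall d, 0 < d -> B d !=set0) ->
  (forall d d', 0 < d -> d <= d' -> B d `<=` B d') ->
  (forall d s, 0 < d -> B d s -> forall k, 0 <= s k <= r) ->
  exists2 ss : I -> R, (forall k, 0 <= ss k <= r) &
    forall d P, 0 < d -> nbhs ss P -> exists s, B d s /\ P s.
Proof.
move=> Bn0 Bmono Bbox.
pose F := filter_from [set d : R | 0 < d] B.
have FF : ProperFilter F.
  apply: filter_from_proper => [|d d0]; last exact: Bn0.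
  apply: filter_from_filter; first by exists 1; rewrite /= ltr01.
  move=> d1 d2 d10 d20; exists (Num.min d1 d2); first by rewrite /= lt_min d10 d20.
  by move=> s Bs; split; apply: Bmono Bs; rewrite ?lt_min ?d10 ?d20 // ge_min lexx ?orbT.
have FK : F [set f | forall k, `[0, r]%classic (f k)].
  by exists 1 => [|s Bs k]; rewrite /= ?ltr01 ?in_itv //; apply: Bbox Bs k.
have [ss [Kss Css]] := tychonoff (fun _ : I => @segment_compact R 0 r) FF FK.
exists ss => [k|d P d0 Pss]; first by have := Kss k; rewrite /= in_itv.
by have [s [Bs Ps]] := Css (B d) P (ex_intro2 _ _ d d0 (fun _ x => x)) Pss; exists s.
Qed.

Section Upstream.
Variables (I : finType) (Ii : I -> {set I}).

Lemma in_Nminus_card i j p :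
  path (fun a b => a \in Ii b) j p -> last j p = i -> in_Nminus Ii #|I| i j.
Proof.
move=> jp; case: (shortenP jp) => q jq /card_uniqP q_uniq _ qi.
exists q; split => //; apply: ltnW.
by have := max_card (mem (j :: q)); rewrite q_uniq.
Qed.

Definition upstream (i : I) : {set I} := [set j | `[< in_Nminus Ii #|I| i j >]].

Lemma upstream_refl i : i \in upstream i.
Proof. by rewrite inE; apply/asboolP; exists [::]. Qed.

Lemma upstream_in_Nminus i j : j \in upstream i -> in_Nminus Ii #|I| i j.
Proof. by rewrite inE => /asboolP. Qed.

Lemma upstream_closed i j k : j \in upstream i -> k \in Ii j -> k \in upstream i.
Proof.
move=> /upstream_in_Nminus [p [jp pi _]] kj; rewrite inE; apply/asboolP.
by apply: (@in_Nminus_card _ _ (j :: p)) => //=; rewrite kj.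
Qed.

End Upstream.

Lemma Gamma_restrict (R : realType) (I : finType) (Ii : I -> {set I})
    (gamma : I -> I -> R -> R) (mu : I -> (I -> R) -> \bar R) (A : {set I}) s j :
  {subset Ii j <= A} ->
  Gamma_i Ii gamma mu j (restrict A s) = Gamma_i Ii gamma mu j s.
Proof.
move=> jA; congr (mu j _); apply/funext => k; rewrite /restrict.
by case: ifP => // /jA ->.
Qed.

Lemma restrict_nonneg (R : realType) (I : finType) (A : {set I}) (s : I -> R) :
  nonneg s -> nonneg (restrict A s).
Proof. by move=> s0 k; rewrite /restrict; case: ifP. Qed.

Section GainOperator.
Variables (R : realType) (I : finType) (Ii : I -> {set I}).
Variables (gamma : I -> I -> R -> R) (mu : I -> (I -> R) -> \bar R).
Local Notation Gam := (Gamma_i Ii gamma mu).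
Local Notation gain_arg j s := (restrict (Ii j) (fun k => gamma j k (s k))).

Lemma uniform_NJI_NJI : uniform_NJI Ii gamma mu -> NJI Ii gamma mu.
Proof.
move=> unji s s0 s_neq0 Gs.
have /existsNP [i /eqP si] : ~ forall i, s i = 0 by move=> s_eq0; apply/s_neq0/funext.
have si0 : 0 < s i by rewrite lt_def si s0.
have r0 : 0 < supnorm s := lt_le_trans si0 (le_trans (ler_norm _) (ler_supnorm s i)).
have [n [delta _ decay]] := unji _ _ r0 si0.
have [j [_ _]] := decay s i s0 (lexx _) (lexx _).
by rewrite ltNge Gs.
Qed.

Definition nondecaying_upstream (n : nat) (d : R) (i : I) (s : I -> R) :=
  forall j, in_Nminus Ii n i j -> d <= s j -> ((s j)%:E <= Gam j s)%E.

Lemma nondecaying_upstream_le n d d' i s : d <= d' ->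
  nondecaying_upstream n d i s -> nondecaying_upstream n d' i s.
Proof. by move=> dd' nd j ji d'j; apply: nd (le_trans dd' d'j). Qed.

Hypothesis gain : is_gain_operator Ii gamma mu.

Lemma gain_arg_nonneg j s : nonneg s -> nonneg (gain_arg j s).
Proof.
case: gain => _ [gammaK _] s0 k; rewrite /restrict; case: ifP => // kj.
exact: Kinf_ge0 (gammaK _ _ kj) (s0 k).
Qed.

Lemma Gamma_ge0 j s : nonneg s -> (0 <= Gam j s)%E.
Proof.
case: gain => _ [_ [_ [[xi [xiK mu_ge]] _]]] /(gain_arg_nonneg j) arg0.
apply: le_trans ((mu_ge j).2 _ arg0); rewrite lee_fin.
exact: Kinf_ge0 xiK (supnorm_ge0 _).
Qed.

Lemma gain_arg_support j s k : k \notin Ii j -> gain_arg j s k = 0.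
Proof. by rewrite /restrict => /negbTE ->. Qed.

Lemma Gamma_fin_num j s : nonneg s -> Gam j s \is a fin_num.
Proof.
case: gain => _ [_ [_ [_ [_ [muC _]]]]] s0.
by apply: (muC j (Ii j)).1; split; [exact: gain_arg_nonneg | exact: gain_arg_support].
Qed.

Lemma Gamma_continuous j s0 e : nonneg s0 -> 0 < e ->
  \forall s \near s0, nonneg s ->
    `|fine (Gam j s) - fine (Gam j s0)| < e.
Proof.
case: gain => _ [_ [gamma_equi [_ [_ [muC _]]]]] s00 e0.
have [d d0 mu_near] := (muC j (Ii j)).2 (gain_arg j s0)
  (conj (gain_arg_nonneg j s00) (@gain_arg_support j s0)) e e0.
have near_gamma k : \forall s \near s0, nonneg s -> k \in Ii j ->
    `|gamma j k (s k) - gamma j k (s0 k)| < d.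
  have [d' d'0 gamma_near] := gamma_equi (s0 k) (s00 k) d d0.
  apply: (@filterS _ _ (fun_nbhs_filter s0) _ _ _ (near_coord s0 k d'0)).
  by move=> s sk s0' kj; apply: gamma_near.
apply: (@filterS _ _ (fun_nbhs_filter s0) _ _ _
  (filter_forall (fun_nbhs_filter s0) near_gamma)) => s gamma_s s0'.
apply: mu_near; first by split; [exact: gain_arg_nonneg | exact: gain_arg_support].
apply: supnorm_lt => // k; rewrite /restrict; case: ifP => kj.
  exact: gamma_s.
by rewrite subr0 normr0.
Qed.

Lemma Gamma_decay_near j s0 : nonneg s0 -> (Gam j s0 < (s0 j)%:E)%E ->
  exists2 c, 0 < c & \forall s \near s0, nonneg s ->
    c <= s j /\ (Gam j s < (s j)%:E)%E.
Proof.
move=> s00 decay; set g := fine (Gam j s0).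
have gE : Gam j s0 = g%:E by rewrite fineK // Gamma_fin_num.
have g0 : 0 <= g by rewrite -lee_fin -gE Gamma_ge0.
move: decay; rewrite gE lte_fin => g_lt.
have e0 : 0 < (s0 j - g) / 2 by lra.
exists ((s0 j + g) / 2); first by lra.
apply: (@filterS _ _ (fun_nbhs_filter s0) _ _ _ (@filterI _ _ (fun_nbhs_filter s0) _ _
  (Gamma_continuous j s00 e0) (near_coord s0 j e0))) => s [Gs sj] s0'.
move: (Gs s0') sj; rewrite -/g !ltr_norml => /andP[? ?] /andP[? ?].
rewrite -(fineK (Gamma_fin_num j s0')) lte_fin; split; lra.
Qed.

Lemma NJI_upstream_decay s i : NJI Ii gamma mu -> nonneg s -> 0 < s i ->
  exists2 j, j \in upstream Ii i & (Gam j s < (s j)%:E)%E.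
Proof.
move=> nji s0 si0; apply: contrapT => /forallPNP nodecay.
pose sA := restrict (upstream Ii i) s.
apply: (nji sA (restrict_nonneg _ s0)).
  move/(congr1 (fun f => f i)); rewrite /sA /restrict upstream_refl.
  exact/eqP/lt0r_neq0.
move=> j; rewrite {1}/sA {1}/restrict; case: ifP => jA.
  rewrite Gamma_restrict; last by move=> k; apply: upstream_closed jA.
  by rewrite leNgt; apply/negP; apply: nodecay.
exact: Gamma_ge0 (restrict_nonneg _ s0).
Qed.

Lemma NJI_uniform_NJI : NJI Ii gamma mu -> uniform_NJI Ii gamma mu.
Proof.
move=> nji r eps r0 eps0; exists #|I|.
pose bad d i s :=
  [/\ nonneg s, eps <= s i, supnorm s <= r & nondecaying_upstream #|I| d i s].
suff [delta delta0 nobad] : exists2 delta, 0 < delta & forall i s, ~ bad delta i s.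
  exists delta => // s i s0 epss sr; apply: contrapT => /forallNP nodecay.
  apply: (nobad i s); split => // j ji dj; rewrite leNgt; apply/negP => decay.
  exact: (nodecay j).
apply: contrapT => /forallPNP allbad.
have bad_le i d d' s : 0 < d -> d <= d' -> bad d i s -> bad d' i s.
  by move=> _ dd' [? ? ? nd]; split => //; apply: nondecaying_upstream_le nd.
have [i badi] : exists i, forall d, 0 < d -> exists s, bad d i s.
  apply: finite_exists_forall_gt0 => [i d d' d0 dd' [s]|d d0].
    by exists s; apply: bad_le dd' _.
  apply: contrapT => /forallNP nobad; apply: (allbad d d0) => i s badis.
  by apply: (nobad i); exists s.
have bad_box d s : 0 < d -> bad d i s -> forall k, 0 <= s k <= r.
  move=> _ [s0 _ sr _] k; rewrite s0 /=.
  exact: le_trans (ler_norm _) (le_trans (ler_supnorm s k) sr).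
have [ss ss_box near_bad] := @box_cluster _ _ r (fun d s => bad d i s) badi
  (fun d d' d0 dd' s => bad_le i d d' s d0 dd') bad_box.
have ss0 : nonneg ss by move=> k; have /andP[] := ss_box k.
have eps_ssi : eps <= ss i.
  rewrite leNgt; apply/negP => ssi_lt; have e0 : 0 < eps - ss i by rewrite subr_gt0.
  have [s [[_ epss _ _] /ltr_normlP[_]]] := near_bad 1 _ ltr01 (near_coord ss i e0).
  lra.
have [j ji decay] := NJI_upstream_decay nji ss0 (lt_le_trans eps0 eps_ssi).
have [c c0 near_decay] := Gamma_decay_near ss0 decay.
have [s [[s0 _ _ nd] /(_ s0) [cs Gs]]] := near_bad c _ c0 near_decay.
by have := nd j (upstream_in_Nminus ji) cs; rewrite leNgt Gs.
Qed.

End GainOperator.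

Theorem proposition2p18 (R : realType) (I : finType) (Ii : I -> {set I})
  (gamma : I -> I -> R -> R) (mu : I -> (I -> R) -> \bar R) :
  (0 < #|I|)%N ->
  is_gain_operator Ii gamma mu ->
  (NJI Ii gamma mu <-> uniform_NJI Ii gamma mu).
Proof.
move=> _ gain; split; [exact: NJI_uniform_NJI | exact: uniform_NJI_NJI].
Qed.
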